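(* Let $G$ be a graph, $t\in\mathbb{N}$, and let $x,y\in V(G)$ be distinct non-adjacent vertices such that $G$ contains $t+3$ pairwise internally vertex-disjoint paths between $x$ and $y$. Then $(G,t)$ has a solution if and only if $(G+xy,t)$ has a solution, where $G+xy$ is $G$ with the edge $xy$ added.
   Context: A solution for $(G,t)$ is a set $S\subseteq V(G)$ with $|S|\le t$ and $\mathrm{tw}(G-S)\le 2$, where $\mathrm{tw}$ is treewidth. *)

From mathcomp Require Import all_boot.
Set Implicit Arguments. Unset Strict Implicit. Unset Printing Implicit Defensive.

Definition simple_graph (T : finType) (e : rel T) : Prop :=
  symmetric e /\ irreflexive e.

(* A finite tree: nonempty, connected, with exactly |I|-1 (undirected) edges. *)
Definition is_tree (I : finType) (te : rel I) : Prop :=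
  [/\ symmetric te, irreflexive te, 0 < #|I|,
      (forall i j : I, connect te i j) &
      #|[set p : I * I | te p.1 p.2]| = 2 * (#|I| - 1)].

(* Treewidth of the subgraph of (T, e) induced by the vertex set V is at most k. *)
Definition tw_le (T : finType) (e : rel T) (V : {set T}) (k : nat) : Prop :=
  exists (I : finType) (te : rel I) (bag : I -> {set T}),
    is_tree te /\
    [/\ (forall i, bag i \subset V),
        (forall v, v \in V -> exists i, v \in bag i),
        (forall u v, u \in V -> v \in V -> e u v ->
            exists i, (u \in bag i) && (v \in bag i)),
        (forall v i j, v \in bag i -> v \in bag j ->
            connect [rel a b | te a b && (v \in bag a) && (v \in bag b)] i j) &
        (forall i, #|bag i| <= k.+1)].

(* (G, t) has a solution: some S with |S| <= t and tw(G - S) <= 2. *)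
Definition has_solution (T : finType) (e : rel T) (t : nat) : Prop :=
  exists S : {set T}, #|S| <= t /\ tw_le e (~: S) 2.

Definition add_edge (T : finType) (e : rel T) (x y : T) : rel T :=
  [rel u v | [|| e u v, (u == x) && (v == y) | (u == y) && (v == x)]].

(* s is the sequence of internal vertices of an x-y path in e *)
Definition xy_path (T : finType) (e : rel T) (x y : T) (s : seq T) : Prop :=
  path e x (rcons s y) /\ uniq (x :: rcons s y).

Definition m_disjoint_paths (T : finType) (e : rel T) (x y : T) (m : nat) : Prop :=
  exists P : 'I_m -> seq T,
    (forall i, xy_path e x y (P i)) /\
    (forall i j, i != j -> forall v, v \in P i -> v \notin P j).

From mathcomp Require Import all_boot.
Set Implicit Arguments. Unset Strict Implicit. Unset Printing Implicit Defensive.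

(* If x and y both survive the deletion of S, a width-2 tree decomposition of
   G - S must already have a bag containing both of them, so adding xy changes
   nothing.  Otherwise some tree edge ab has x in bag a but not in bag b while
   y lies on the b-side; then bag a ∩ bag b has at most 2 vertices and separates
   x from y in G - S, so every one of the t + 3 disjoint x-y paths meets S or
   this separator, which is impossible with |S| <= t. *)

Definition arcs (I : finType) (r : rel I) : {set I * I} := [set p | r p.1 p.2].

Section ConnectedArcs.
Variables (I : finType) (r : rel I) (r0 : I).
Hypotheses (r_sym : symmetric r) (r_conn : forall u v, connect r u v).

Let reachable v : exists n, [exists p : n.-tuple I, path r r0 p && (last r0 p == v)].
Proof.
have /connectP[p pp lp] := r_conn r0 v; exists (size p); apply/existsP.
by exists (in_tuple p); rewrite /= pp -lp eqxx.
Qed.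

Let dist v := ex_minn (reachable v).

Let closer_neighbor v : v != r0 -> exists2 u, r u v & dist u < dist v.
Proof.
rewrite /dist; case: ex_minnP => n /existsP[p /andP[pp /eqP lp]] _ v_r0.
have := size_tuple p; move: pp lp; case/lastP: (tval p) => [_ /= lp|q w].
  by rewrite lp eqxx in v_r0.
rewrite rcons_path last_rcons size_rcons => /andP[pq rw] <- <-.
exists (last r0 q) => //; case: ex_minnP => m _ min_m; apply: min_m.
by apply/existsP; exists (in_tuple q); rewrite /= pq eqxx.
Qed.

(* Every vertex other than r0 has a parent in a shortest-path tree; the arcs
   to and from the parents are 2 (|I| - 1) distinct arcs. *)
Lemma card_arcs_connected : 2 * (#|I| - 1) <= #|arcs r|.
Proof.
pose par v := odflt r0 [pick u | r u v && (dist u < dist v)].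
have parP v : v != r0 -> r (par v) v && (dist (par v) < dist v).
  move=> v_r0; rewrite /par; case: pickP => [u // | none].
  by have [u ruv duv] := closer_neighbor v_r0; have := none u; rewrite ruv duv.
pose down := [set (par v, v) | v in [set~ r0]].
pose up := [set (v, par v) | v in [set~ r0]].
have card_down : #|down| = #|I|.-1 by rewrite card_imset ?cardsC1 // => u w [].
have card_up : #|up| = #|I|.-1 by rewrite card_imset ?cardsC1 // => u w [].
have down_up : down :&: up = set0.
  apply/setP=> p; rewrite !inE.
  apply/negP=> /andP[/imsetP[v + ->] /imsetP[w + [vw wv]]]; rewrite !inE => v_r0 w_r0.
  have /andP[_ dv] := parP v v_r0; have /andP[_ dw] := parP w w_r0.
  by rewrite vw in dv; rewrite -wv in dw; have := ltn_trans dv dw; rewrite ltnn.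
have : down :|: up \subset arcs r.
  apply/subsetP=> p; rewrite !inE => /orP[] /imsetP[v + ->]; rewrite !inE /= => v_r0;
    have /andP[rv _] := parP v v_r0; by rewrite // r_sym.
move/subset_leq_card; rewrite cardsU down_up cards0 subn0 card_down card_up.
by rewrite -subn1 mul2n -addnn.
Qed.

End ConnectedArcs.

Lemma disjoint_paths_card_le (T : finType) (X : {set T}) m (P : 'I_m -> seq T) :
    (forall i j, i != j -> forall v, v \in P i -> v \notin P j) ->
    (forall i, has (mem X) (P i)) ->
  m <= #|X|.
Proof.
move=> disj hit; have hitP i : exists v, (v \in X) && (v \in P i).
  by have /hasP[v vP vX] := hit i; exists v; apply/andP.
pose g i := xchoose (hitP i).
have gX i : g i \in X by case/andP: (xchooseP (hitP i)).
have gP i : g i \in P i by case/andP: (xchooseP (hitP i)).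
have g_inj : injective g.
  move=> i j gij; apply/eqP; apply: contraT => ij.
  by have := disj i j ij _ (gP i); rewrite gij gP.
have : [set g i | i in 'I_m] \subset X by apply/subsetP=> _ /imsetP[i _ ->].
by move/subset_leq_card; rewrite card_imset // card_ord.
Qed.

Definition remove_edge (I : finType) (te : rel I) (a b : I) : rel I :=
  [rel u w | te u w && ~~ ((u == a) && (w == b)) && ~~ ((u == b) && (w == a))].
Arguments remove_edge I te a b /.

Section RemoveEdge.
Variables (I : finType) (te : rel I) (a b : I).

Lemma remove_edge_sym : symmetric te -> symmetric (remove_edge te a b).
Proof.
move=> te_sym u w; rewrite /= te_sym.
by rewrite [(w == a) && _]andbC [(w == b) && _]andbC -!andbA [X in te w u && X]andbC.
Qed.

Lemma remove_edgeW u w : te u w -> u != a -> w != a -> remove_edge te a b u w.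
Proof. by move=> tuw /negbTE ua /negbTE wa; rewrite /= tuw ua wa andbF. Qed.

Lemma arcs_remove_edge : arcs (remove_edge te a b) = arcs te :\ (a, b) :\ (b, a).
Proof.
apply/setP=> -[u w]; rewrite /arcs !inE /= !xpair_eqE.
by case: (te u w); case: (u == a); case: (u == b); case: (w == a); case: (w == b).
Qed.

(* A tree has exactly 2 (|I| - 1) arcs, so it cannot stay connected after
   losing the two arcs of an edge. *)
Lemma tree_remove_edge_disconnected :
  is_tree te -> te a b -> ~~ connect (remove_edge te a b) a b.
Proof.
case=> te_sym te_irr _ te_conn card_te tab; apply/negP=> cab.
have ab : a != b by apply: contraTneq tab => ->; rewrite te_irr.
have conn u w : connect (remove_edge te a b) u w.
  apply: connect_sub (te_conn u w) => {}u {}w tuw.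
  case ruw: (remove_edge te a b u w); first exact: connect1.
  move: ruw; rewrite /= tuw /= => /negbT; rewrite negb_and !negbK.
  case/orP=> /andP[/eqP-> /eqP->] //.
  by rewrite (sym_connect_sym (remove_edge_sym te_sym)).
have := card_arcs_connected a (remove_edge_sym te_sym) conn.
have ab_arc : (a, b) \in arcs te by rewrite inE.
have ba_arc : (b, a) \in arcs te :\ (a, b).
  by rewrite !inE /= xpair_eqE eq_sym (negbTE ab) te_sym.
rewrite arcs_remove_edge.
move: (cardsD1 (b, a) (arcs te :\ (a, b))) (cardsD1 (a, b) (arcs te)).
rewrite ab_arc ba_arc [#|arcs te|]card_te => -> ->.
by rewrite !add1n => /ltnW; rewrite ltnn.
Qed.

End RemoveEdge.

Section TreeDecomposition.
Variables (T : finType) (e : rel T) (V : {set T}) (I : finType) (te : rel I)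
  (bag : I -> {set T}).
Hypothesis te_tree : is_tree te.
Hypothesis bag_cover : forall v, v \in V -> exists i, v \in bag i.
Hypothesis bag_edge : forall u v, u \in V -> v \in V -> e u v ->
  exists i, (u \in bag i) && (v \in bag i).
Hypothesis bag_connect : forall v i j, v \in bag i -> v \in bag j ->
  connect [rel a b | te a b && (v \in bag a) && (v \in bag b)] i j.

Lemma exit_edge x j s : x \notin bag j -> path te j s -> x \in bag (last j s) ->
  exists a b, [/\ te b a, x \in bag a, x \notin bag b & connect (remove_edge te a b) j b].
Proof.
elim: s j => [|c s IH] j /=; first by move=> /negbTE->.
move=> xj /andP[tjc pc] xl; case: (boolP (x \in bag c)) => xc.
  by exists c, j; split; rewrite ?connect0.
have [a [b [tba xa xb cb]]] := IH c xc pc xl.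
exists a, b; split=> //; apply: connect_trans cb; apply/connect1/remove_edgeW => //.
  by apply: contraNneq xj => ->.
by apply: contraNneq xc => ->.
Qed.

Lemma connect_bags_remove_edge a b v i j : v \notin bag a :&: bag b ->
  v \in bag i -> v \in bag j -> connect (remove_edge te a b) i j.
Proof.
move=> vab vi vj; apply: connect_sub (bag_connect vi vj) => u w /andP[/andP[tuw vu] vw].
apply: connect1; rewrite /= tuw /=.
by apply/andP; split; apply: contra vab => /andP[/eqP<- /eqP<-]; rewrite inE ?vu ?vw.
Qed.

Definition a_side a b v := exists2 i, v \in bag i & connect (remove_edge te a b) a i.

(* bag a ∩ bag b separates the two sides of the tree edge ab. *)
Lemma a_side_path a b u s : let W := V :\: (bag a :&: bag b) in
  u \in W -> all (mem W) s -> path e u s -> a_side a b u -> a_side a b (last u s).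
Proof.
move=> W; elim: s u => [|c s IH] u //= uW /andP[cW sW] /andP[euc pc] [i ui ai].
apply: IH => //; move: uW cW; rewrite !in_setD => /andP[uab uV] /andP[_ cV].
have [k /andP[uk ck]] := bag_edge uV cV euc.
by exists k; last exact: connect_trans ai (connect_bags_remove_edge uab ui uk).
Qed.

Lemma separating_edge x y : x \in V -> y \in V ->
    (forall i, ~~ ((x \in bag i) && (y \in bag i))) ->
  exists a b, [/\ x \in bag a, x \notin bag b &
    forall s, path e x (rcons s y) -> all (mem V) s -> has (mem (bag a :&: bag b)) s].
Proof.
move=> xV yV no_bag; have [i0 xi0] := bag_cover xV; have [j0 yj0] := bag_cover yV.
have xj0 : x \notin bag j0 by apply: contra (no_bag j0) => ->.
have [te_sym _ _ te_conn _] := te_tree.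
have /connectP[p pp lp] := te_conn j0 i0; rewrite lp in xi0.
have [a [b [tba xa xb j0b]]] := exit_edge xj0 pp xi0.
exists a, b; split=> // s xys sV; apply/negPn/negP=> /hasPn sZ.
have ya : y \notin bag a by apply: contra (no_bag a); rewrite xa.
have yab : y \notin bag a :&: bag b by rewrite inE (negbTE ya).
have yW : y \in V :\: (bag a :&: bag b) by rewrite in_setD yab yV.
have xW : x \in V :\: (bag a :&: bag b) by rewrite in_setD inE (negbTE xb) andbF xV.
have sW : all (mem (V :\: (bag a :&: bag b))) (rcons s y).
  rewrite all_rcons; apply/andP; split=> //; apply/allP=> v vs.
  have vV : v \in V := allP sV v vs.
  by rewrite /= in_setD vV andbT; apply: sZ.
have [] := a_side_path xW sW xys; first by exists a; rewrite ?connect0.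
rewrite last_rcons => i yi ai.
have := tree_remove_edge_disconnected te_tree (etrans (te_sym a b) tba).
by rewrite (connect_trans ai (connect_trans (connect_bags_remove_edge yab yi yj0) j0b)).
Qed.

Lemma common_bag_disjoint_paths k x y m (P : 'I_m -> seq T) :
    (forall i, #|bag i| <= k.+1) -> #|~: V| + k < m -> x \in V -> y \in V ->
    (forall i, xy_path e x y (P i)) ->
    (forall i j, i != j -> forall v, v \in P i -> v \notin P j) ->
  exists i, (x \in bag i) && (y \in bag i).
Proof.
move=> bag_size many xV yV paths disj.
case: (boolP [exists i, (x \in bag i) && (y \in bag i)]) => [/existsP // | /existsPn no_bag].
have [a [b [xa xb sep]]] := separating_edge xV yV no_bag.
have card_sep : #|bag a :&: bag b| <= k.
  rewrite -ltnS; apply: leq_trans (bag_size a); apply/proper_card/properP.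
  by split; [exact: subsetIl | exists x; rewrite // inE (negbTE xb) andbF].
have hit i : has (mem (~: V :|: bag a :&: bag b)) (P i).
  have [xyP _] := paths i; apply/hasP.
  case: (boolP (all (mem V) (P i))) => [PV | /allPn[v vP vV]].
    by have /hasP[v vP vZ] := sep _ xyP PV; exists v; rewrite //= inE; apply/orP; right.
  by exists v; rewrite //= !inE vV.
have := disjoint_paths_card_le disj hit; rewrite cardsU => /leq_trans/(_ (leq_subr _ _)).
by move/leq_trans/(_ (leq_add (leqnn _) card_sep)); rewrite leqNgt many.
Qed.

End TreeDecomposition.

Lemma tw_le_subrel (T : finType) (e e' : rel T) V k :
  subrel e e' -> tw_le e' V k -> tw_le e V k.
Proof.
move=> ee' [I [te [bag [tree [sub cov edge conn size]]]]].
by exists I, te, bag; split=> //; split=> // u v uV vV /ee'; exact: edge.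
Qed.

Lemma tw_le_add_edge (T : finType) (e : rel T) V k x y m :
    m_disjoint_paths e x y m -> #|~: V| + k < m ->
  tw_le e V k -> tw_le (add_edge e x y) V k.
Proof.
move=> [P [paths disj]] many [I [te [bag [tree [sub cov edge conn size]]]]].
have common := common_bag_disjoint_paths tree cov edge conn size many _ _ paths disj.
exists I, te, bag; split=> //; split=> // u v uV vV.
case/or3P=> [/edge | /andP[/eqP eux /eqP evy] | /andP[/eqP euy /eqP evx]]; first exact.
  by subst; exact: common.
by subst; have [i xyi] := common vV uV; exists i; rewrite andbC.
Qed.

Theorem mainTheorem6 (T : finType) (e : rel T) (t : nat) (x y : T) :
  simple_graph e -> x != y -> ~~ e x y ->
  m_disjoint_paths e x y (t + 3) ->
  (has_solution e t <-> has_solution (add_edge e x y) t).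
Proof.
move=> _ _ _ paths; split=> -[S [card_S tw_S]]; exists S; split=> //.
  by apply: tw_le_add_edge paths _ tw_S; rewrite setCK -addn1 -addnA leq_add2r.
by apply: tw_le_subrel tw_S => u v euv; rewrite /add_edge /= euv.
Qed.
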